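(* Let $Q$ be an $n\times n$ real symmetric matrix, $\Delta_n := \{x \in \mathbb{R}^n : x \ge 0,\ \sum_j x_j = 1\}$, $\nu(Q) := \min_{x\in\Delta_n} x^TQx$, let $\ell$ be any lower bound on $\nu(Q)$, let $M_j = \max_{i=1,\ldots,n} Q_{ij} - \ell$ and let $U_j \ge M_j$ for $j = 1,\ldots,n$. Let $e_j$ denote the $j$-th unit vector and $e$ the all-ones vector in $\mathbb{R}^n$. Consider the two mixed integer linear programs (MILP1), in variables $x,s\in\mathbb{R}^n$, $y\in\{0,1\}^n$, $\lambda\in\mathbb{R}$: \[ \min\ \lambda\ \text{ s.t. } Qx - \lambda e - s = 0,\ e^Tx = 1,\ x_j \le y_j,\ s_j \le M_j(1-y_j)\ (j=1,\ldots,n),\ x\ge 0,\ s \ge 0,\ y_j\in\{0,1\}; \] (MILP2), in variables $x,z\in\mathbb{R}^n$, $y\in\{0,1\}^n$, $\alpha\in\mathbb{R}$: \[ \min\ \alpha\ \text{ s.t. } e_j^TQx \le \alpha + z_j,\ e^Tx = 1,\ x_j \le y_j,\ z_j \le U_j(1-y_j)\ (j=1,\ldots,n),\ x\ge 0,\ z\ge 0,\ y_j\in\{0,1\}. \] Then the inequalities \[ y_i + y_j \le 1 \quad \text{for all } 1 \le i < j \le n \text{ with } Q_{ii} + Q_{jj} - 2Q_{ij} \le 0 \] are valid for both (MILP1) and (MILP2), i.e., adding them to either formulation does not change its optimal value $\nu(Q)$. *)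

From HB Require Import structures.
From mathcomp Require Import all_boot all_order all_algebra.
From mathcomp Require Import reals.
Set Implicit Arguments. Unset Strict Implicit. Unset Printing Implicit Defensive.
Import Order.TTheory GRing.Theory Num.Theory.
Local Open Scope ring_scope.

Section Defs.
Variables (R : realType) (n : nat).

Definition in_simplex (x : 'cV[R]_n) : Prop :=
  (forall j, 0 <= x j 0) /\ \sum_(j < n) x j 0 = 1.

Definition qform (Q : 'M[R]_n) (x : 'cV[R]_n) : R := (x^T *m Q *m x) 0 0.

Definition is_simplex_min (Q : 'M[R]_n) (nu : R) : Prop :=
  (exists2 x, in_simplex x & qform Q x = nu) /\
  (forall x, in_simplex x -> nu <= qform Q x).

(* max_{i} Q_ij  (the seed Q_jj is itself one of the entries) *)
Definition colmax (Q : 'M[R]_n) (j : 'I_n) : R :=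
  \big[Num.max/Q j j]_(i < n) Q i j.

Definition Mbig (Q : 'M[R]_n) (l : R) (j : 'I_n) : R := colmax Q j - l.

Definition bin (b : bool) : R := (b : nat)%:R.

Definition milp1_feas (Q : 'M[R]_n) (M : 'I_n -> R)
    (x s : 'cV[R]_n) (y : 'I_n -> bool) (lam : R) : Prop :=
  Q *m x - lam *: const_mx 1 - s = 0 /\
  \sum_(j < n) x j 0 = 1 /\
  (forall j, x j 0 <= bin (y j)) /\
  (forall j, s j 0 <= M j * (1 - bin (y j))) /\
  (forall j, 0 <= x j 0) /\ (forall j, 0 <= s j 0).

Definition milp2_feas (Q : 'M[R]_n) (U : 'I_n -> R)
    (x z : 'cV[R]_n) (y : 'I_n -> bool) (alpha : R) : Prop :=
  (forall j, (Q *m x) j 0 <= alpha + z j 0) /\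
  \sum_(j < n) x j 0 = 1 /\
  (forall j, x j 0 <= bin (y j)) /\
  (forall j, z j 0 <= U j * (1 - bin (y j))) /\
  (forall j, 0 <= x j 0) /\ (forall j, 0 <= z j 0).

Definition cuts (Q : 'M[R]_n) (y : 'I_n -> bool) : Prop :=
  forall i j : 'I_n, (i < j)%N -> Q i i + Q j j - 2 * Q i j <= 0 ->
    bin (y i) + bin (y j) <= 1.

Definition opt_value1 (Q : 'M[R]_n) (M : 'I_n -> R) (withcuts : bool) (v : R) : Prop :=
  (exists x s y, milp1_feas Q M x s y v /\ (withcuts -> cuts Q y)) /\
  (forall x s y lam, milp1_feas Q M x s y lam -> (withcuts -> cuts Q y) -> v <= lam).

Definition opt_value2 (Q : 'M[R]_n) (U : 'I_n -> R) (withcuts : bool) (v : R) : Prop :=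
  (exists x z y, milp2_feas Q U x z y v /\ (withcuts -> cuts Q y)) /\
  (forall x z y a, milp2_feas Q U x z y a -> (withcuts -> cuts Q y) -> v <= a).

End Defs.

(* At a minimiser x of q(x) = x^T Q x over the simplex, first-order optimality gives
   (Qx)_k >= nu for every k, with equality on the support of x.  Hence s := Qx - nu e
   and y := the support indicator of x form a feasible point of value nu of both
   programs, while the big-M constraints force x_j s_j = 0 (resp. x_j z_j = 0), so
   every feasible point has value at least x^T Q x >= nu.  If two support indices
   i < j satisfy Q_ii + Q_jj - 2 Q_ij <= 0, q is concave along e_i - e_j, so moving
   all the mass of one of them onto the other gives a minimiser with smaller support;
   iterating yields a minimiser whose support satisfies every cut. *)

From HB Require Import structures.
From mathcomp Require Import all_boot all_order all_algebra.
From mathcomp Require Import reals.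
From mathcomp Require Import ring lra.
Import Order.TTheory GRing.Theory Num.Theory.
Set Implicit Arguments. Unset Strict Implicit. Unset Printing Implicit Defensive.
Local Open Scope ring_scope.

Lemma ge0_of_quadratic_ge0 (R : realFieldType) (a b : R) :
  (forall t, 0 < t <= 1 -> 0 <= t * b + t ^+ 2 * a) -> 0 <= b.
Proof.
move=> quad_ge0; rewrite leNgt; apply/negP => b_lt0.
have den_gt0 : 0 < `|a| - b by rewrite ltr_wpDl // oppr_gt0.
pose t := - b / (`|a| - b).
have t_gt0 : 0 < t by rewrite divr_gt0 // oppr_gt0.
have t_le1 : t <= 1 by rewrite ler_pdivrMr // mul1r lerDr.
have t_a : t * a <= t * `|a| by apply: ler_wpM2l; [exact: ltW | exact: ler_norm].
have slope_lt0 : b + t * `|a| < 0.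
  have -> : b + t * `|a| = - (b ^+ 2 / (`|a| - b)) by rewrite /t; field; rewrite gt_eqF.
  by rewrite oppr_lt0 divr_gt0 // exprn_even_gt0 //= lt_eqF.
have := quad_ge0 t; rewrite t_gt0 t_le1 => /(_ isT).
rewrite expr2 -mulrA -mulrDr pmulr_rge0 //; lra.
Qed.

Section BilinearForm.
Variables (R : realType) (n : nat) (Q : 'M[R]_n).

Definition bform (u w : 'cV[R]_n) : R := (u^T *m Q *m w) 0 0.

Lemma bformE u w : bform u w = \sum_a u a 0 * (Q *m w) a 0.
Proof. by rewrite /bform -mulmxA mxE; apply: eq_bigr => a _; rewrite mxE. Qed.

Lemma qform_bform x : qform Q x = bform x x.
Proof. by []. Qed.

Lemma bformDl u1 u2 w : bform (u1 + u2) w = bform u1 w + bform u2 w.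
Proof. by rewrite /bform linearD /= !mulmxDl mxE. Qed.

Lemma bformZl c u w : bform (c *: u) w = c * bform u w.
Proof. by rewrite /bform linearZ /= -!scalemxAl mxE. Qed.

Lemma bformDr u w1 w2 : bform u (w1 + w2) = bform u w1 + bform u w2.
Proof. by rewrite /bform mulmxDr mxE. Qed.

Lemma bformZr c u w : bform u (c *: w) = c * bform u w.
Proof. by rewrite /bform -scalemxAr mxE. Qed.

Lemma bform_deltal i w : bform (delta_mx i 0) w = (Q *m w) i 0.
Proof. by rewrite /bform trmx_delta -mulmxA -rowE mxE. Qed.

Lemma bform_delta i j : bform (delta_mx i 0) (delta_mx j 0) = Q i j.
Proof. by rewrite bform_deltal -colE mxE. Qed.

Hypothesis Q_sym : Q^T = Q.

Lemma bformC u w : bform u w = bform w u.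
Proof.
have tr11 (A : 'M[R]_1) : A 0 0 = A^T 0 0 by rewrite mxE.
by rewrite /bform tr11 !trmx_mul trmxK Q_sym mulmxA.
Qed.

Lemma qform_lineE x v t :
  qform Q (x + t *: v) = qform Q x + 2 * t * bform v x + t ^+ 2 * qform Q v.
Proof.
rewrite !qform_bform bformDl bformDr bformDr !bformZl !bformZr (bformC x v).
ring.
Qed.

Lemma qform_delta_sub i j :
  qform Q (delta_mx i 0 - delta_mx j 0) = Q i i + Q j j - 2 * Q i j.
Proof.
have Q_ji : Q j i = Q i j by rewrite -[in LHS]Q_sym mxE.
rewrite qform_bform -scaleN1r bformDl bformDr bformDr !bformZl !bformZr.
rewrite !bform_delta Q_ji; ring.
Qed.

End BilinearForm.

Section Simplex.
Variables (R : realType) (n : nat).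
Implicit Types (x y v : 'cV[R]_n).

Definition supp x : {set 'I_n} := [set a | x a 0 != 0].

Lemma sum_entries_line x v t :
  \sum_a (x + t *: v) a 0 = \sum_a x a 0 + t * \sum_a v a 0.
Proof. by rewrite mulr_sumr -big_split; apply: eq_bigr => a _; rewrite !mxE. Qed.

Lemma in_simplex_le1 x a : in_simplex x -> x a 0 <= 1.
Proof. by case=> x_ge0 <-; rewrite (bigD1 a) //= lerDl sumr_ge0. Qed.

Lemma in_simplex_delta k : in_simplex (delta_mx k 0 : 'cV[R]_n).
Proof.
split=> [a|]; first by rewrite mxE.
by rewrite (bigD1 k) //= big1 => [|a /negbTE ak]; rewrite mxE ?ak ?eqxx ?addr0.
Qed.

Lemma in_simplex_segment x y t : in_simplex x -> in_simplex y -> 0 <= t <= 1 ->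
  in_simplex (x + t *: (y - x)).
Proof.
move=> [x_ge0 x_sum] [y_ge0 y_sum] /andP[t_ge0 t_le1]; split=> [a|].
  have -> : (x + t *: (y - x)) a 0 = (1 - t) * x a 0 + t * y a 0.
    by rewrite !mxE; ring.
  by rewrite addr_ge0 ?mulr_ge0 ?subr_ge0.
by rewrite -scaleN1r !sum_entries_line x_sum y_sum; ring.
Qed.

Lemma in_simplex_transfer x i j t : in_simplex x -> i != j ->
  - x i 0 <= t <= x j 0 -> in_simplex (x + t *: (delta_mx i 0 - delta_mx j 0)).
Proof.
move=> [x_ge0 x_sum] ij /andP[t_ge t_le]; split=> [a|].
  rewrite !mxE !andbT; case: (eqVneq a i) => [->|_].
    by rewrite (negbTE ij) /= subr0 mulr1; lra.
  case: (eqVneq a j) => [->|_] /=; last by rewrite subrr mulr0 addr0.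
  by rewrite sub0r mulrN1; lra.
have [_ i_sum] := in_simplex_delta i; have [_ j_sum] := in_simplex_delta j.
by rewrite -scaleN1r !sum_entries_line i_sum j_sum x_sum; ring.
Qed.

Lemma mulmx_tr_le_colmax (Q : 'M[R]_n) x a : in_simplex x ->
  (Q^T *m x) a 0 <= colmax Q a.
Proof.
move=> [x_ge0 x_sum]; rewrite mxE -[leRHS]mulr1 -x_sum mulr_sumr.
apply: ler_sum => i _; rewrite mxE; apply: ler_wpM2r; first exact: x_ge0.
exact: (le_bigmax (Q a a) (fun k => Q k a)).
Qed.

End Simplex.

Section MilpFeasibility.
Variables (R : realType) (n : nat) (Q : 'M[R]_n).
Implicit Types (x s : 'cV[R]_n) (y : 'I_n -> bool) (M : 'I_n -> R).

Lemma bin_complementarity (b : bool) (u w m : R) :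
  0 <= u <= bin R b -> 0 <= w <= m * (1 - bin R b) -> u * w = 0.
Proof.
rewrite /bin; case: b => /andP[u_ge0 u_le] /andP[w_ge0 w_le] /=.
  rewrite subrr mulr0 in w_le.
  by rewrite (@le_anti _ _ w 0) ?w_le ?mulr0.
by rewrite (@le_anti _ _ u 0) ?u_le ?mul0r.
Qed.

Lemma milp1_feas_simplex M x s y lam : milp1_feas Q M x s y lam -> in_simplex x.
Proof. by case=> _ [x_sum [_ [_ [x_ge0 _]]]]. Qed.

Lemma milp2_feas_simplex M x s y lam : milp2_feas Q M x s y lam -> in_simplex x.
Proof. by case=> _ [x_sum [_ [_ [x_ge0 _]]]]. Qed.

Lemma milp1_feas_qform M x s y lam : milp1_feas Q M x s y lam -> qform Q x = lam.
Proof.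
case=> /eqP; rewrite subr_eq0 subr_eq => /eqP Qx.
move=> [x_sum [x_le [s_le [x_ge0 s_ge0]]]].
rewrite qform_bform bformE Qx.
under eq_bigr => a _.
  rewrite !mxE mulr1 mulrDr (@bin_complementarity (y a) (x a 0) (s a 0) (M a));
    rewrite ?x_ge0 ?x_le ?s_ge0 ?s_le //.
  by rewrite add0r over.
by rewrite -mulr_suml x_sum mul1r.
Qed.

Lemma milp2_feas_qform_le U x z y alpha :
  milp2_feas Q U x z y alpha -> qform Q x <= alpha.
Proof.
case=> Qx_le [x_sum [x_le [z_le [x_ge0 z_ge0]]]].
rewrite qform_bform bformE (@le_trans _ _ (\sum_a x a 0 * (alpha + z a 0))) //.
  by apply: ler_sum => a _; apply: ler_wpM2l.
under eq_bigr => a _.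
  rewrite mulrDr (@bin_complementarity (y a) (x a 0) (z a 0) (U a));
    rewrite ?x_ge0 ?x_le ?z_ge0 ?z_le //.
  by rewrite addr0 over.
by rewrite -mulr_suml x_sum mul1r.
Qed.

Lemma milp1_feas_milp2 M U x s y lam : (forall j, M j <= U j) ->
  milp1_feas Q M x s y lam -> milp2_feas Q U x s y lam.
Proof.
move=> M_le_U [/eqP]; rewrite subr_eq0 subr_eq => /eqP Qx.
move=> [x_sum [x_le [s_le [x_ge0 s_ge0]]]].
split=> [j|]; first by rewrite Qx !mxE mulr1 addrC.
do !split=> //; move=> j; apply: le_trans (s_le j) _; apply: ler_wpM2r => //.
by rewrite subr_ge0 /bin; case: (y j).
Qed.

End MilpFeasibility.

Section SimplexMinimum.
Variables (R : realType) (n : nat) (Q : 'M[R]_n) (nu : R).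
Hypotheses (Q_sym : Q^T = Q) (nu_le : forall y, in_simplex y -> nu <= qform Q y).
Implicit Types (x y : 'cV[R]_n).

Lemma simplex_min_variational x y : in_simplex x -> qform Q x = nu ->
  in_simplex y -> nu <= bform Q y x.
Proof.
move=> x_simplex qx y_simplex.
suff : 0 <= 2 * bform Q (y - x) x.
  by rewrite pmulr_rge0 // -scaleN1r bformDl bformZl -qform_bform qx mulN1r subr_ge0.
apply: (@ge0_of_quadratic_ge0 _ (qform Q (y - x))) => t /andP[t_gt0 t_le1].
have t_unit : 0 <= t <= 1 by rewrite ltW.
have := nu_le (in_simplex_segment x_simplex y_simplex t_unit).
rewrite qform_lineE // qx -subr_ge0; congr (0 <= _); ring.
Qed.

Lemma simplex_min_mulmx_ge x k : in_simplex x -> qform Q x = nu ->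
  nu <= (Q *m x) k 0.
Proof.
move=> x_simplex qx; rewrite -bform_deltal.
exact: simplex_min_variational (in_simplex_delta _ _).
Qed.

Lemma simplex_min_mulmx_supp x k : in_simplex x -> qform Q x = nu ->
  k \in supp x -> (Q *m x) k 0 = nu.
Proof.
move=> x_simplex qx; rewrite inE => xk_neq0; have [x_ge0 x_sum] := x_simplex.
have slack_ge0 a : 0 <= x a 0 * ((Q *m x) a 0 - nu).
  by rewrite mulr_ge0 // subr_ge0 simplex_min_mulmx_ge.
have slack_sum : \sum_a x a 0 * ((Q *m x) a 0 - nu) = 0.
  under eq_bigr do rewrite mulrBr.
  by rewrite sumrB -bformE -qform_bform qx -mulr_suml x_sum mul1r subrr.
have /eqP := @psumr_eq0P _ _ _ _ (fun a _ => slack_ge0 a) slack_sum k isT.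
by rewrite mulf_eq0 (negbTE xk_neq0) subr_eq0 => /eqP.
Qed.

Lemma simplex_min_transfer x i j : in_simplex x -> qform Q x = nu -> i != j ->
  i \in supp x -> j \in supp x -> Q i i + Q j j - 2 * Q i j <= 0 ->
  exists2 x', in_simplex x' & qform Q x' = nu /\ supp x' \proper supp x.
Proof.
move=> x_simplex qx ij; rewrite !inE => xi xj dij; have [x_ge0 _] := x_simplex.
pose v : 'cV[R]_n := delta_mx i 0 - delta_mx j 0.
pose g := bform Q v x.
(* Empty coordinate i or j, on the side where the linear term 2 t g is nonpositive;
   the quadratic term t^2 q(v) is nonpositive by hypothesis. *)
pose t := if 0 <= g then - x i 0 else x j 0.
have t_range : - x i 0 <= t <= x j 0.
  have := x_ge0 i; have := x_ge0 j.
  by rewrite /t; case: ifP => _ ? ?; apply/andP; split; lra.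
have tg_le0 : t * g <= 0.
  rewrite /t; case: ifP => [g_ge0|/negbT]; first by rewrite mulNr oppr_le0 mulr_ge0.
  by rewrite -ltNge => /ltW; apply: mulr_ge0_le0.
have entry s a : (x + s *: v) a 0 = x a 0 + s * ((a == i)%:R - (a == j)%:R).
  by rewrite !mxE !andbT.
exists (x + t *: v); first exact: in_simplex_transfer.
split.
  apply/eqP; rewrite eq_le nu_le ?andbT; last exact: in_simplex_transfer.
  rewrite qform_lineE // qx qform_delta_sub // -/g.
  have : t ^+ 2 * (Q i i + Q j j - 2 * Q i j) <= 0 by rewrite mulr_ge0_le0 ?sqr_ge0.
  lra.
apply/properP; split.
  apply/subsetP => a; rewrite !inE entry.
  case: (eqVneq a i) => [-> _ // | _]; case: (eqVneq a j) => [-> _ // | _].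
  by rewrite subrr mulr0 addr0.
rewrite /t; case: ifP => _; [exists i | exists j]; rewrite !inE ?xi ?xj // entry eqxx.
  by rewrite (negbTE ij) subr0 mulr1 subrr eqxx.
by rewrite [j == i]eq_sym (negbTE ij) sub0r mulrN1 subrr eqxx.
Qed.

Lemma exists_simplex_min_cuts x : in_simplex x -> qform Q x = nu ->
  exists2 x', in_simplex x' & qform Q x' = nu /\ cuts Q (fun a => a \in supp x').
Proof.
have [k] := ubnP #|supp x|; elim: k => // k IH in x *; rewrite ltnS => supp_le x_simplex qx.
case: (boolP [exists i : 'I_n, exists j : 'I_n,
    [&& (i < j)%N, i \in supp x, j \in supp x & Q i i + Q j j - 2 * Q i j <= 0]]).
  move=> /existsP[i /existsP[j /and4P[ij xi xj dij]]].
  have [x' x'_simplex [qx' supp_proper]] :=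
    simplex_min_transfer x_simplex qx (negbT (ltn_eqF ij)) xi xj dij.
  apply: IH x'_simplex qx'; exact: leq_trans (proper_card supp_proper) supp_le.
rewrite negb_exists => /forallP no_pair; exists x => //; split=> // i j ij dij.
move: (no_pair i); rewrite negb_exists => /forallP/(_ j).
rewrite ij dij andbT /= /bin.
by case: (i \in supp x); case: (j \in supp x); rewrite //= ?addr0 ?add0r.
Qed.

Lemma simplex_min_milp1_feas x l : in_simplex x -> qform Q x = nu -> l <= nu ->
  milp1_feas Q (Mbig Q l) x (Q *m x - nu *: const_mx 1) (fun a => a \in supp x) nu.
Proof.
move=> x_simplex qx l_le_nu; have [x_ge0 x_sum] := x_simplex.
have s_entry a : (Q *m x - nu *: const_mx 1) a 0 = (Q *m x) a 0 - nu.
  by rewrite !mxE mulr1.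
split; first by rewrite subrr.
split=> //; split=> [a|]; first rewrite /bin inE.
  by case: eqP => [->|_]; rewrite //= in_simplex_le1.
split=> [a|]; last by split=> // a; rewrite s_entry subr_ge0 simplex_min_mulmx_ge.
rewrite s_entry /bin; case: (boolP (a \in supp x)) => [xa|_] /=.
  by rewrite simplex_min_mulmx_supp // !subrr mulr0.
rewrite subr0 mulr1 /Mbig lerB // -{1}Q_sym.
exact: mulmx_tr_le_colmax.
Qed.

End SimplexMinimum.

Theorem theorem2 (R : realType) (n : nat) (Q : 'M[R]_n) (nu l : R)
    (U : 'I_n -> R) :
  Q^T = Q ->
  is_simplex_min Q nu ->
  l <= nu ->
  (forall j, Mbig Q l j <= U j) ->
  (opt_value1 Q (Mbig Q l) false nu /\ opt_value1 Q (Mbig Q l) true nu) /\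
  (opt_value2 Q U false nu /\ opt_value2 Q U true nu).
Proof.
move=> Q_sym [[x0 x0_simplex qx0] nu_le] l_le_nu M_le_U.
have [x x_simplex [qx x_cuts]] := exists_simplex_min_cuts Q_sym nu_le x0_simplex qx0.
pose s := Q *m x - nu *: const_mx 1; pose y a := a \in supp x.
have feas1 : milp1_feas Q (Mbig Q l) x s y nu :=
  simplex_min_milp1_feas Q_sym nu_le x_simplex qx l_le_nu.
have feas2 : milp2_feas Q U x s y nu := milp1_feas_milp2 M_le_U feas1.
have lb1 x' s' y' lam : milp1_feas Q (Mbig Q l) x' s' y' lam -> nu <= lam.
  by move=> F; rewrite -(milp1_feas_qform F); exact/nu_le/milp1_feas_simplex/F.
have lb2 x' z' y' alpha : milp2_feas Q U x' z' y' alpha -> nu <= alpha.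
  by move=> F; apply: le_trans (milp2_feas_qform_le F); exact/nu_le/milp2_feas_simplex/F.
split; split; split; try by exists x, s, y.
all: move=> ? ? ? ? F _; by [apply: lb1 F | apply: lb2 F].
Qed.
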